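(* Let $X$ be a topological space and consider the topological group $C_p(X)$. Then the following properties of $C_p(X)$ are all equivalent: $\alpha_{2^-}$, $\alpha_2$, $\alpha_{3^-}$, $\alpha_3$, $\alpha_4$, locally Ramsey, and Ramsey.
   Context: $C_p(X)$ is the group of continuous real-valued functions on $X$ with the topology of pointwise convergence. Convention: a ''sequence'' is a countably infinite set; a countably infinite set $A$ converges to $x$ if $x\notin A$ and every neighborhood of $x$ contains all but finitely many elements of $A$. $\lim_m x_{nm}=x$ means $x_{nm}\neq x$ for all $m$ and every neighborhood of $x$ contains $x_{nm}$ for all but finitely many $m$. A space $Y$ is $\alpha_i$ ($i=2,3,4$) if for each $y\in Y$ and all pairwise disjoint sequences $S_1,S_2,\dots\subseteq Y$ each converging to $y$, there is a sequence $S\subseteq\bigcup_nS_n$ converging to $y$ such that, respectively: ($\alpha_2$) $S_n\cap S$ is infinite for all $n$; ($\alpha_3$) $S_n\cap S$ is infinite for infinitely many $n$; ($\alpha_4$) $S_n\cap S$ is nonempty for infinitely many $n$. $Y$ is $\alpha_{2^-}$ if for each $y$, whenever $\lim_m x_{nm}=y$ for all $n$, there are $m_1<m_2<\dots$ with $\bigcup_n\{x_{1m_n},\dots,x_{nm_n}\}$ converging to $y$. $Y$ is $\alpha_{3^-}$ if for each $y$, whenever $\lim_m x_{nm}=y$ for all $n$, there are infinite $I,J\subseteq\mathbb N$ with $\{x_{nm}:n\in I, m\in J, n<m\}$ converging to $y$. $Y$ is locally Ramsey if for each $y$, whenever $\lim_m x_{nm}=y$ for all $n$, there is an infinite $I\subseteq\mathbb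 N$ with $\{x_{nm}: n,m\in I, n<m\}$ converging to $y$. $Y$ is Ramsey if whenever $\lim_m x_{nm}=x_n$ for each $n$ and $\lim_n x_n=y$, there is an infinite $I\subseteq\mathbb N$ such that for each neighborhood $U$ of $y$ there is $k$ with $\{x_{nm}: k<n<m,\ n,m\in I\}\subseteq U$. *)

From HB Require Import structures.
From mathcomp Require Import all_boot all_order all_algebra.
From mathcomp Require Import all_classical all_reals all_analysis.

Set Implicit Arguments.
Unset Strict Implicit.
Unset Printing Implicit Defensive.

Import numFieldNormedType.Exports.
Local Open Scope classical_set_scope.

(** C_p(X): continuous real-valued functions on X, as a subspace (initial
    topology of the inclusion) of the product space {ptws X -> R}. *)
Definition Cp (X : topologicalType) (R : realType) : topologicalType :=
  set_type ([set f : X -> R | continuous f] : set {ptws X -> R}).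

Section Props.
Context {Y : topologicalType}.

Definition is_sequence (A : set Y) : Prop := countable A /\ ~ finite_set A.

Definition set_converges (A : set Y) (y : Y) : Prop :=
  is_sequence A /\ ~ A y /\
  forall U, nbhs y U -> finite_set (A `\` U).

Definition lim_seq (x : nat -> Y) (y : Y) : Prop :=
  (forall m, x m <> y) /\
  forall U, nbhs y U -> exists k, forall m, (k <= m)%N -> U (x m).

Definition pairwise_disjoint (S : nat -> set Y) : Prop :=
  forall n m, n <> m -> S n `&` S m = set0.

Definition alpha_hyp (y : Y) (S : nat -> set Y) : Prop :=
  pairwise_disjoint S /\ forall n, set_converges (S n) y.

Definition alpha2 : Prop :=
  forall (y : Y) (S : nat -> set Y), alpha_hyp y S ->
  exists T : set Y, T `<=` \bigcup_n S n /\ set_converges T y /\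
    forall n, ~ finite_set (S n `&` T).

Definition alpha3 : Prop :=
  forall (y : Y) (S : nat -> set Y), alpha_hyp y S ->
  exists T : set Y, T `<=` \bigcup_n S n /\ set_converges T y /\
    ~ finite_set [set n | ~ finite_set (S n `&` T)].

Definition alpha4 : Prop :=
  forall (y : Y) (S : nat -> set Y), alpha_hyp y S ->
  exists T : set Y, T `<=` \bigcup_n S n /\ set_converges T y /\
    ~ finite_set [set n | S n `&` T !=set0].

(** (indices start at 0 instead of 1) *)
Definition alpha2m : Prop :=
  forall (y : Y) (x : nat -> nat -> Y), (forall n, lim_seq (x n) y) ->
  exists mu : nat -> nat, (forall n, (mu n < mu n.+1)%N) /\
    set_converges [set z | exists n i, (i <= n)%N /\ z = x i (mu n)] y.

Definition alpha3m : Prop :=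
  forall (y : Y) (x : nat -> nat -> Y), (forall n, lim_seq (x n) y) ->
  exists I J : set nat, ~ finite_set I /\ ~ finite_set J /\
    set_converges [set z | exists n m, [/\ I n, J m, (n < m)%N & z = x n m]] y.

Definition locally_Ramsey : Prop :=
  forall (y : Y) (x : nat -> nat -> Y), (forall n, lim_seq (x n) y) ->
  exists I : set nat, ~ finite_set I /\
    set_converges [set z | exists n m, [/\ I n, I m, (n < m)%N & z = x n m]] y.

Definition Ramsey : Prop :=
  forall (y : Y) (xn : nat -> Y) (x : nat -> nat -> Y),
  (forall n, lim_seq (x n) (xn n)) -> lim_seq xn y ->
  exists I : set nat, ~ finite_set I /\
    forall U, nbhs y U -> exists k,
      [set z | exists n m, [/\ I n, I m, (k < n < m)%N & z = x n m]] `<=` U.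

End Props.
Arguments alpha2 : clear implicits.
Arguments alpha3 : clear implicits.
Arguments alpha4 : clear implicits.
Arguments alpha2m : clear implicits.
Arguments alpha3m : clear implicits.
Arguments locally_Ramsey : clear implicits.
Arguments Ramsey : clear implicits.

(* In any T1 space, alpha2 => alpha3 => alpha4 and alpha2^- => locally Ramsey
   => alpha3^- => alpha4, while alpha2^- gives alpha2 through the converging
   triangle {x_(i, mu k) | i <= k}.  The heart is alpha4 => alpha2^- in C_p(X):
   for x_(n,m) -> y put h_(n,m) = y + sum_(i <= n) |x_(i,m) - y| + c_(n,m) with
   small constants c_(n,m) > 0.  Each h_n still tends to y, and a fixed function
   equals some h_(n,m) with m large for only finitely many n, so a sequence that
   alpha4 extracts from the tails of the h_n yields mu along which x_(i, mu k)
   tends to y uniformly in i <= k.  Translations in the group C_p(X) then give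
   Ramsey from this diagonal (apply it to y + x_(n,m) - x_n) and locally Ramsey
   from Ramsey (apply Ramsey to x_(n,m) + 1/(n+1) -> y + 1/(n+1) -> y). *)

From mathcomp Require Import all_boot all_order all_algebra.
From mathcomp Require Import all_classical all_reals all_analysis.
From mathcomp Require Import lra.

Set Implicit Arguments.
Unset Strict Implicit.
Unset Printing Implicit Defensive.

Import Order.TTheory GRing.Theory Num.Theory.
Import numFieldNormedType.Exports.
Local Open Scope classical_set_scope.

Section nat_sets.
Implicit Types (A J : set nat) (mu : nat -> nat).

Lemma finite_nat_bounded A : finite_set A -> exists k, forall n, A n -> (n < k)%N.
Proof.
move=> /finite_seqP [s ->]; elim: s => [|a s [k Hk]]; first by exists 0%N.
exists (maxn a.+1 k) => n /=; rewrite in_cons => /orP [/eqP ->|/Hk nk].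
  by rewrite leq_max leqnn.
by rewrite leq_max nk orbT.
Qed.

Lemma bounded_nat_finite A k : (forall n, A n -> (n < k)%N) -> finite_set A.
Proof. by move=> Ak; apply: sub_finite_set (finite_II k) => n /Ak. Qed.

Lemma infinite_nat_unbounded A : infinite_set A -> forall b, exists n, (b < n)%N /\ A n.
Proof.
move=> iA b; apply: contrapT => nAb; apply: iA; apply: (@bounded_nat_finite _ b.+1).
by move=> n An; rewrite ltnS leqNgt; apply/negP => bn; apply: nAb; exists n.
Qed.

Lemma infinite_nat_gt b A : infinite_set A -> infinite_set (A `&` [set n | (b < n)%N]).
Proof.
move=> iA fA; apply: iA; have : finite_set (A `&` [set n | (b < n)%N] `|` `I_b.+1).
  by rewrite finite_setU; split => //; exact: finite_II.
apply: sub_finite_set => n An.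
by case: (ltnP b n) => bn; [left|right].
Qed.

Lemma infinite_nat_ge b : infinite_set [set n | (b <= n)%N].
Proof.
by apply: (sub_infinite_set _ (@infinite_nat_gt b _ infinite_nat)) => n [_ /ltnW].
Qed.

Lemma increasingS mu : (forall k, (mu k < mu k.+1)%N) -> {homo mu : m n / (m < n)%N}.
Proof. by apply: homo_ltn => ? ? ? /ltn_trans; apply. Qed.

Lemma increasing_ge mu : {homo mu : m n / (m < n)%N} -> forall k, (k <= mu k)%N.
Proof. by move=> muS; elim=> // k IH; exact: leq_ltn_trans IH (muS _ _ (ltnSn k)). Qed.

Lemma increasing_image_infinite mu J :
  {homo mu : m n / (m < n)%N} -> infinite_set J -> infinite_set (mu @` J).
Proof.
move=> muS iJ /finite_nat_bounded [b Hb]; apply: iJ; apply: (@bounded_nat_finite _ b).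
by move=> k Jk; apply: leq_ltn_trans (increasing_ge muS k) _; apply: Hb; exists k.
Qed.

Lemma infinite_nat_enum A (g : nat -> nat) : infinite_set A ->
  exists nu : nat -> nat, (forall k, nu k + g (nu k) < nu k.+1)%N /\ forall k, A (nu k).
Proof.
move=> /infinite_nat_unbounded nextP; have [next Hnext] := choice nextP.
pose nu := fix nu k := if k is k'.+1 then next (nu k' + g (nu k'))%N else next 0%N.
by exists nu; split => [k|[|k]]; [exact: (Hnext _).1|exact: (Hnext _).2..].
Qed.

Lemma increasing_enum A : infinite_set A ->
  exists nu : nat -> nat, {homo nu : m n / (m < n)%N} /\ forall k, A (nu k).
Proof.
move=> /(infinite_nat_enum (fun=> 0%N)) [nu [nuS Anu]]; exists nu; split => //.
by apply: increasingS => k; rewrite -[nu k]addn0.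
Qed.

Lemma increasing_thin mu : {homo mu : m n / (m < n)%N} ->
  exists I, infinite_set I /\
    forall n m, I n -> I m -> (n < m)%N -> exists2 k, (n < k)%N & m = mu k.
Proof.
move=> muS; pose a := fix a j := if j is j'.+1 then mu (a j').+1 else 0%N.
have aS : {homo a : m n / (m < n)%N}.
  by apply: increasingS => j; exact: increasing_ge muS _.
exists (range a); split; first exact: increasing_image_infinite aS infinite_nat.
move=> _ _ [j1 _ <-] [[|j2] _ <-] lt12; first by move: lt12; rewrite ltn0.
have j12 : (j1 <= j2)%N.
  rewrite -ltnS; apply: contraTT lt12; rewrite -!leqNgt.
  exact: (ltnW_homo aS).
by exists (a j2).+1 => //; rewrite ltnS (ltnW_homo aS).
Qed.

End nat_sets.
Arguments infinite_nat_gt b [A].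
Arguments infinite_nat_ge : clear implicits.

Lemma countable_range2_sub {T : Type} (A : set T) (f : nat -> nat -> T) :
  (forall z, A z -> exists n m, z = f n m) -> countable A.
Proof.
move=> Af; have : A `<=` (fun p : nat * nat => f p.1 p.2) @` setT.
  by move=> z /Af [n [m ->]]; exists (n, m).
move/subset_card_le => /card_le_trans; apply.
by apply: card_le_trans (card_image_le _ _) _; exact: countableP.
Qed.

Section sequences_in_space.
Variable Y : topologicalType.
Implicit Types (y : Y) (u : nat -> Y) (x : nat -> nat -> Y) (A B T : set Y)
  (S : nat -> set Y).

Lemma set_converges_sub A B y :
  set_converges A y -> B `<=` A -> infinite_set B -> set_converges B y.
Proof.
move=> [[cA _] [Ay AU]] BA iB; split; [split|split] => //.
- exact: card_le_trans (subset_card_le BA) cA.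
- by move/BA.
- by move=> U /AU; apply: sub_finite_set => z [/BA].
Qed.

Lemma set_converges_enum A y : set_converges A y ->
  exists u, (forall m, A (u m)) /\ lim_seq u y.
Proof.
move=> [[_ /infiniteP /card_leP [f]] [Ay AU]].
pose u m : Y := \val (f (exist _ m (mem_set I))).
have uA m : A (u m) by rewrite /u; case: (f _) => z /=; rewrite inE.
have u_inj : injective u.
  move=> m m' /val_inj /(@inj _ _ _ f) => /(_ (mem_set I) (mem_set I)).
  by case.
exists u; split => //; split; first by move=> m um; apply: Ay; rewrite -um.
move=> U /AU fAU; have : finite_set (u @^-1` (A `\` U)).
  by apply: finite_preimage => // m m' _ _; exact: u_inj.
move/finite_nat_bounded => [k Hk]; exists k => m km; apply: contrapT => nU.
by move: (Hk m (conj (uA m) nU)); rewrite ltnNge km.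
Qed.

Lemma set_converges_enum_all S y : (forall n, set_converges (S n) y) ->
  exists u : nat -> nat -> Y, forall n, (forall m, S n (u n m)) /\ lim_seq (u n) y.
Proof.
by move=> Sy; have [u uS] := choice (fun n => set_converges_enum (Sy n)); exists u.
Qed.

Lemma bigcup_set_converges S y N :
  (forall n, set_converges (S n) y) -> set_converges (\bigcup_(j in `I_N.+1) S j) y.
Proof.
move=> Sy; split; [split|split].
- apply: bigcup_countable; first exact: countableP.
  by move=> j _; case: (Sy j) => -[].
- by apply: (sub_infinite_set _ (Sy 0%N).1.2) => z Sz; exists 0%N.
- by case=> j _ Sjy; case: (Sy j) => _ [].
- move=> U Uy; have : finite_set (\bigcup_(j in `I_N.+1) (S j `\` U)).
    apply: bigcup_finite; first exact: finite_II.
    by move=> j _; case: (Sy j) => _ [_]; apply.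
  by apply: sub_finite_set => z [[j jN Sjz] nU]; exists j.
Qed.

Lemma setD_bigcup_finite S N :
  (forall n, (N < n)%N -> finite_set (S n `\` \bigcup_(j in `I_n) S j)) ->
  forall n, finite_set (S n `\` \bigcup_(j in `I_N.+1) S j).
Proof.
move=> Snew; elim/ltn_ind => n IH; have [nN|Nn] := leqP n N.
  by apply: sub_finite_set (@finite_set0 Y) => z [Sz]; apply; exists n.
have : finite_set ((S n `\` \bigcup_(j in `I_n) S j) `|`
                   \bigcup_(j in `I_n) (S j `\` \bigcup_(j in `I_N.+1) S j)).
  rewrite finite_setU; split; first exact: Snew.
  by apply: bigcup_finite => [|j jn]; [exact: finite_II|exact: IH].
apply: sub_finite_set => z [Sz nAz].
have [[j jn Sjz]|nSz] := pselect ((\bigcup_(j in `I_n) S j) z); first by right; exists j.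
by left.
Qed.

Lemma alpha2_alpha3 : alpha2 Y -> alpha3 Y.
Proof.
move=> a2 y S /a2 [T [TS [Ty ST]]]; exists T; split => //; split => //.
by apply: (sub_infinite_set _ infinite_nat) => n _; exact: ST.
Qed.

Lemma alpha3_alpha4 : alpha3 Y -> alpha4 Y.
Proof.
move=> a3 y S /a3 [T [TS [Ty ST]]]; exists T; split => //; split => //.
by apply: (sub_infinite_set _ ST) => n /infinite_setN0.
Qed.

Lemma locally_Ramsey_alpha3m : locally_Ramsey Y -> alpha3m Y.
Proof. by move=> LR y x /LR [I [iI Iy]]; exists I, I. Qed.

Lemma alpha3m_alpha4 : alpha3m Y -> alpha4 Y.
Proof.
move=> a3 y S [_ /set_converges_enum_all [u uS]].
have [I [J [iI [iJ IJy]]]] := a3 y u (fun n => (uS n).2).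
exists [set z | exists n m, [/\ I n, J m, (n < m)%N & z = u n m]]; split.
  by move=> z [n [m [_ _ _ ->]]]; exists n => //; exact: (uS n).1.
split => //; apply: (sub_infinite_set _ iI) => n In.
have [m [nm Jm]] := infinite_nat_unbounded iJ n.
by exists (u n m); split; [exact: (uS n).1|exists n, m].
Qed.

Lemma alpha4_nondisjoint : alpha4 Y -> forall y (S : nat -> set Y),
  (forall n, set_converges (S n) y) ->
  exists T, T `<=` \bigcup_n S n /\ set_converges T y /\
    infinite_set [set n | S n `&` T !=set0].
Proof.
move=> a4 y S Sy; pose S' n := S n `\` \bigcup_(j in `I_n) S j.
have [iS'|/contrapT fS'] := pselect (infinite_set [set n | infinite_set (S' n)]).
  have [nu [nuS iS'nu]] := increasing_enum iS'.
  have S'lt k l : (k < l)%N -> S' (nu k) `&` S' (nu l) = set0.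
    move=> kl; apply/seteqP; split => // z [[Sz _] [_]]; apply.
    by exists (nu k) => //; exact: nuS.
  have [|T [TS [Ty S'T]]] := a4 y (S' \o nu).
    split=> [k l /eqP|k].
      by rewrite neq_ltn => /orP [/S'lt|/S'lt]; rewrite // setIC.
    by apply: set_converges_sub (Sy (nu k)) _ (iS'nu k) => z [].
  exists T; split; first by move=> z /TS [k _ [Sz _]]; exists (nu k).
  split => //; apply: (sub_infinite_set _ (increasing_image_infinite nuS S'T)).
  by move=> _ [k [z [[Sz _] Tz]] <-]; exists z.
have [N HN] := finite_nat_bounded fS'.
pose A := \bigcup_(j in `I_N.+1) S j.
have SA n : finite_set (S n `\` A).
  apply: setD_bigcup_finite => m Nm; apply: contrapT => /HN.
  by rewrite ltnNge (ltnW Nm).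
exists A; split; first by move=> z [j _ Sjz]; exists j.
split; first exact: bigcup_set_converges.
apply: (sub_infinite_set _ infinite_nat) => n _; apply: contrapT => nSA.
apply: (Sy n).1.2; apply: sub_finite_set (SA n) => z Sz; split => // Az.
by apply: nSA; exists z.
Qed.

Hypothesis Y_T1 : accessible_space Y.

Lemma nbhs_setC_finite A y : finite_set A -> ~ A y -> nbhs y (~` A).
Proof.
move=> fA Ay; apply: open_nbhs_nbhs; split => //.
by rewrite openC; exact: accessible_finite_set_closed.1 Y_T1 _ fA.
Qed.

Lemma lim_seq_image_infinite u y (J : set nat) :
  lim_seq u y -> infinite_set J -> infinite_set (u @` J).
Proof.
move=> [uy uU] iJ fJ; apply: iJ.
have /uU [k Hk] : nbhs y (~` (u @` J)) by apply: nbhs_setC_finite => // -[m _ /uy].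
apply: (@bounded_nat_finite _ k) => n Jn.
by rewrite ltnNge; apply/negP => /Hk; apply; exists n.
Qed.

Lemma lim_seq_image_converges u y (J : set nat) :
  lim_seq u y -> infinite_set J -> set_converges (u @` J) y.
Proof.
move=> uy iJ; split; [split|split].
- by apply: card_le_trans (card_image_le _ _) _; exact: countableP.
- exact: lim_seq_image_infinite uy iJ.
- by case=> m _; apply: uy.1.
- move=> U /uy.2 [k Hk]; apply: sub_finite_set (finite_image u (finite_II k)).
  move=> z [[m Jm <-] nU]; exists m => //=; rewrite ltnNge; apply/negP => /Hk.
  exact: nU.
Qed.

Lemma pairs_set_infinite x y (I : set nat) :
  (forall n, lim_seq (x n) y) -> infinite_set I ->
  infinite_set [set z | exists n m, [/\ I n, I m, (n < m)%N & z = x n m]].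
Proof.
move=> xy iI; have [n In] := infinite_setN0 iI.
apply: (sub_infinite_set _ (lim_seq_image_infinite (xy n) (infinite_nat_gt n iI))).
by move=> _ [m [Im nm] <-]; exists n, m.
Qed.

Definition diagonal_cvg x (mu : nat -> nat) y := forall U, nbhs y U ->
  exists k0, forall k i, (k0 <= k)%N -> (i <= k)%N -> U (x i (mu k)).

Lemma diagonal_cvg_set_converges x mu y :
  (forall n, lim_seq (x n) y) -> {homo mu : m n / (m < n)%N} -> diagonal_cvg x mu y ->
  set_converges [set z | exists n i, (i <= n)%N /\ z = x i (mu n)] y.
Proof.
move=> xy muS xmuy; split; [split|split].
- apply: (@countable_range2_sub _ _ (fun n i => x i (mu n))).
  by move=> z [n [i [_ ->]]]; exists n, i.
- apply: (sub_infinite_set _ (lim_seq_image_infinite (xy 0%N)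
    (increasing_image_infinite muS infinite_nat))).
  by move=> _ [_ [k _ <-] <-]; exists k, 0%N.
- by case=> n [i [_ E]]; apply: ((xy i).1 (mu n)); rewrite -E.
- move=> U /xmuy [k0 Hk0]; apply: sub_finite_set (finite_image (fun p => x p.2 (mu p.1))
     (finite_setX (finite_II k0) (finite_II k0))).
  move=> z [[n [i [i_n ->]]] nU]; exists (n, i) => //.
  have nk0 : (n < k0)%N by rewrite ltnNge; apply/negP => k0n; apply: nU; exact: Hk0.
  by split => //; exact: leq_ltn_trans i_n nk0.
Qed.

Lemma alpha2m_alpha2 : alpha2m Y -> alpha2 Y.
Proof.
move=> a2 y S [_ /set_converges_enum_all [u uS]].
have [mu [/increasingS muS Zy]] := a2 y u (fun n => (uS n).2).
exists [set z | exists n i, (i <= n)%N /\ z = u i (mu n)]; split.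
  by move=> z [n [i [_ ->]]]; exists i => //; exact: (uS i).1.
split => // n; apply: (sub_infinite_set _ (lim_seq_image_infinite (uS n).2
  (increasing_image_infinite muS (infinite_nat_ge n)))).
move=> _ [_ [k nk <-] <-]; split; first exact: (uS n).1.
by exists k, n.
Qed.

Lemma alpha2m_locally_Ramsey : alpha2m Y -> locally_Ramsey Y.
Proof.
move=> a2 y x xy; have [mu [/increasingS muS Zy]] := a2 y x xy.
have [I [iI HI]] := increasing_thin muS.
exists I; split => //; apply: set_converges_sub Zy _ (pairs_set_infinite xy iI).
move=> z [n [m [In Im nm ->]]]; have [k nk ->] := HI n m In Im nm.
by exists k, n; split => //; exact: ltnW.
Qed.

End sequences_in_space.

Section Cp.
Variables (R : realType) (X : topologicalType).
Local Notation Y := (Cp X R).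
Local Notation P := {ptws X -> R}.
Local Open Scope ring_scope.
Implicit Types (f g y : Y) (s : seq X) (e : R).

Definition ev f (t : X) : R := (\val f : X -> R) t.

Definition Cp_of (g : X -> R) (cg : continuous g) : Y := exist _ (g : P) (mem_set cg).

Lemma ev_continuous f : continuous (ev f).
Proof. by have := valP f; rewrite inE. Qed.

Lemma ev_inj f g : (forall t, ev f t = ev g t) -> f = g.
Proof. by move=> fg; apply: val_inj; apply: funext. Qed.

Lemma ev_neq f g : f <> g -> exists t, ev f t != ev g t.
Proof.
move=> fg; apply: contrapT => nfg; apply: fg; apply: ev_inj => t.
by apply/eqP; apply: contrapT => /negP fgt; apply: nfg; exists t.
Qed.

Lemma eval_continuous (t : X) : continuous (ev^~ t : Y -> R).
Proof.
have val_continuous : continuous (set_val : Y -> P) by exact: initial_continuous.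
move=> f; exact: (continuous_comp (val_continuous f)
  (@proj_continuous X (fun=> R) t (set_val f))).
Qed.

Lemma Cp_accessible : accessible_space Y.
Proof.
move=> f g /eqP/ev_neq [t ft].
exists ((ev^~ t) @^-1` ~` [set ev g t]); split; rewrite ?inE //=; last exact/eqP.
apply: open_comp => [h _|]; first exact: eval_continuous.
rewrite openC; apply: accessible_closed_set1; apply: hausdorff_accessible.
exact: Rhausdorff.
Qed.

Definition box f s e : set Y := [set g | forall t, t \in s -> `|ev g t - ev f t| < e].

Lemma nbhs_box f s e : 0 < e -> nbhs f (box f s e).
Proof.
move=> e0; elim: s => [|t s IH]; first by apply: filterS filterT => g _ t.
have : nbhs f [set g | `|ev g t - ev f t| < e].
  have := @eval_continuous t f _ (nbhsx_ballx (ev f t) e e0).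
  by rewrite nbhs_simpl; apply: (filterS (F := nbhs f)) => g; rewrite /ball /= distrC.
move/filterI => /(_ _ IH); apply: filterS => g [gt gs] u.
by rewrite in_cons => /orP [/eqP ->|/gs].
Qed.

Definition ptws_box (f : P) s e : set P :=
  [set g | forall t, t \in s -> `|g t - f t| < e].

Definition ptws_boxes (f : P) : set_system P :=
  [set V | exists s e, 0 < e /\ ptws_box f s e `<=` V].

Lemma ptws_boxes_filter (f : P) : Filter (ptws_boxes f).
Proof.
constructor.
- by exists [::], 1; split => // g _ t.
- move=> A B [s [e [e0 sA]]] [s' [e' [e0' sB]]].
  exists (s ++ s'), (Num.min e e'); split; first by rewrite lt_min e0 e0'.
  move=> g ge; split.
    apply: sA => t ts; apply: lt_le_trans (ge t _) _; first by rewrite mem_cat ts.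
    by rewrite ge_min lexx.
  apply: sB => t ts; apply: lt_le_trans (ge t _) _; first by rewrite mem_cat ts orbT.
  by rewrite ge_min lexx orbT.
- by move=> A B AB [s [e [e0 sA]]]; exists s, e; split => //; exact: subset_trans AB.
Qed.

Lemma ptws_boxes_cvg (f : P) : ptws_boxes f --> f.
Proof.
have := ptws_boxes_filter f => FF.
apply/pointwise_cvgP => t V /nbhs_ballP [e e0 eV].
exists [:: t], e; split => // g gt; apply: eV.
by rewrite /ball /= distrC; exact: gt t (mem_head _ _).
Qed.

Lemma nbhs_boxP f (U : set Y) : nbhs f U -> exists s e, 0 < e /\ box f s e `<=` U.
Proof.
rewrite nbhsE => -[B [[A oA AB] Bf] BU].
have : nbhs (set_val f : P) A by apply: open_nbhs_nbhs; split => //; rewrite -AB in Bf.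
move/ptws_boxes_cvg => [s [e [e0 sA]]]; exists s, e; split => // g gf.
by apply: BU; rewrite -AB; apply: sA => t ts; exact: gf.
Qed.

Lemma lim_seq_CpP (u : nat -> Y) y : lim_seq u y <->
  (forall m, u m <> y) /\ forall t, (fun m => ev (u m) t) @ \oo --> ev y t.
Proof.
split=> -[uy uU]; split => //.
  move=> t V /(@eval_continuous t y) /uU [k uV]; exists k => // m /uV.
move=> U /nbhs_boxP [s [e [e0 sU]]].
suff [k _ ub] : \forall m \near \oo, box y s e (u m) by exists k => m /ub /sU.
elim: s {sU} => [|t s IH]; first by apply: filterS filterT => m _ t.
have := (@cvgrPdist_lt _ _ _ _ eventually_filter _ _).1 (uU t) e e0.
move/filterI => /(_ _ IH).
apply: filterS => m [mt ms] v.
by rewrite in_cons => /orP [/eqP ->|/ms //]; rewrite distrC.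
Qed.

Section diagonal.
Variables (y : Y) (x : nat -> nat -> Y).
Hypothesis xy : forall n, lim_seq (x n) y.

Definition dev i m t := `|ev (x i m) t - ev y t|.

Definition sdev n m t := \sum_(i < n.+1) dev i m t.

Definition gap n : R := (n.+1%:R)^-1 / 2.

Definition offset n m : R := harmonic m * gap n.

Lemma sdev_ge0 n m t : 0 <= sdev n m t.
Proof. by apply: sumr_ge0 => i _; exact: normr_ge0. Qed.

Lemma dev_le_sdev n m t i : (i <= n)%N -> dev i m t <= sdev n m t.
Proof.
rewrite -ltnS => ilt; rewrite /sdev (bigD1 (Ordinal ilt)) //= lerDl.
by apply: sumr_ge0 => j _; exact: normr_ge0.
Qed.

Lemma sdev_continuous n m : continuous (sdev n m).
Proof.
apply: continuous_big => [|i _ t]; first exact: add_continuous.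
by apply: cvg_norm; apply: cvgB; exact: ev_continuous.
Qed.

Lemma sdev_cvg0 n t : sdev n m t @[m --> \oo] --> 0.
Proof.
have -> : 0 = \sum_(i < n.+1) (0 : R) by rewrite big1.
apply: cvg_big => [|i _]; first exact: add_continuous.
rewrite -(@normr0 _ R) -(subrr (ev y t)); apply: cvg_norm.
apply: cvgB; last exact: cvg_cst.
by have [_] := (lim_seq_CpP _ _).1 (xy i); apply.
Qed.

Lemma gap_gt0 n : 0 < gap n.
Proof. by rewrite divr_gt0 // invr_gt0 ltr0n. Qed.

Lemma offset_gt0 n m : 0 < offset n m.
Proof. by rewrite mulr_gt0 ?gap_gt0 ?harmonic_gt0. Qed.

Lemma offset_le_gap n m : offset n m <= gap n.
Proof. by rewrite ler_piMl ?(ltW (gap_gt0 n)) // invf_le1 ?ltr0n // ler1n. Qed.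

Lemma probe_continuous n m : continuous (fun t => ev y t + (sdev n m t + offset n m)).
Proof.
move=> t; apply: cvgD; first exact: ev_continuous.
by apply: cvgD; [exact: sdev_continuous|exact: cvg_cst].
Qed.

Definition probe n m : Y := Cp_of (@probe_continuous n m).

Lemma ev_probe n m t : ev (probe n m) t = ev y t + (sdev n m t + offset n m).
Proof. by []. Qed.

Lemma probe_neq n m : probe n m <> y.
Proof.
have [t _] := ev_neq ((xy 0).1 0) => py.
have := ev_probe n m t; rewrite py.
have := sdev_ge0 n m t; have := offset_gt0 n m; lra.
Qed.

Lemma probe_lim n : lim_seq (probe n) y.
Proof.
apply/lim_seq_CpP; split => [|t]; first exact: probe_neq.
rewrite -[ev y t]addr0 -[0 in X in _ --> X]addr0.
apply: cvgD; first exact: cvg_cst.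
apply: cvgD; first exact: sdev_cvg0.
by rewrite -(mul0r (gap n)); apply: cvgM; [exact: cvg_harmonic|exact: cvg_cst].
Qed.

Lemma sdev_eventually_lt t0 : exists N : nat -> nat, forall n,
  (n <= N n)%N /\ forall m, (N n <= m)%N -> sdev n m t0 < gap n.
Proof.
have Nex n : exists Nn, (n <= Nn)%N /\ forall m, (Nn <= m)%N -> sdev n m t0 < gap n.
  have [k _ Hk] := (@cvgrPdist_lt _ _ _ _ eventually_filter _ _).1
    (sdev_cvg0 n t0) _ (gap_gt0 n).
  exists (maxn n k); split => [|m]; first exact: leq_maxl.
  rewrite geq_max => /andP [_ /Hk]; rewrite /= sub0r normrN ger0_norm //.
  exact: sdev_ge0.
by have [N HN] := choice Nex; exists N.
Qed.

(* At [t0] we have [0 < probe n m - y < 1/(n+1)] once [m >= N n], so a given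
   function can be [probe n m] for only boundedly many [n]. *)
Lemma probe_indices_finite t0 (N : nat -> nat) :
  (forall n m, (N n <= m)%N -> sdev n m t0 < gap n) ->
  forall F : set Y, finite_set F ->
  finite_set [set n | exists m, (N n <= m)%N /\ F (probe n m)].
Proof.
move=> Nclose F fF.
have bounded z : exists B, forall n m, (N n <= m)%N -> probe n m = z -> (n < B)%N.
  pose d := ev z t0 - ev y t0.
  exists (Num.Def.archi_bound d^-1) => n m Nm pz.
  have dE : d = sdev n m t0 + offset n m by rewrite /d -pz ev_probe addrC addKr.
  have d0 : 0 < d by rewrite dE; have := sdev_ge0 n m t0; have := offset_gt0 n m; lra.
  have dlt : d < (n.+1%:R)^-1.
    rewrite [X in _ < X]splitr -/(gap n) dE.
    by have := Nclose n m Nm; have := offset_le_gap n m; lra.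
  have : (n.+1%:R : R) < (Num.Def.archi_bound d^-1)%:R.
    have dinv0 : 0 <= d^-1 by rewrite invr_ge0 ltW.
    apply: lt_trans (archi_boundP dinv0).
    by rewrite -[X in X < _]invrK ltf_pV2 ?posrE ?invr_gt0 ?ltr0n.
  by rewrite ltr_nat => /ltnW.
have : finite_set (\bigcup_(z in F) [set n | exists m, (N n <= m)%N /\ probe n m = z]).
  apply: bigcup_finite => // z _; have [B HB] := bounded z.
  by apply: (@bounded_nat_finite _ B) => n [m [Nm pz]]; exact: HB n m Nm pz.
by apply: sub_finite_set => n [m [Nm Fp]]; exists (probe n m) => //; exists m.
Qed.

Lemma alpha4_diagonal : alpha4 Y ->
  exists mu, {homo mu : m n / (m < n)%N} /\ diagonal_cvg x mu y.
Proof.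
move=> a4; have [t0 _] := ev_neq ((xy 0).1 0).
have [N HN] := sdev_eventually_lt t0.
pose S n := probe n @` [set m | (N n <= m)%N].
have Sy n : set_converges (S n) y.
  exact: (lim_seq_image_converges Cp_accessible (@probe_lim n) (infinite_nat_ge (N n))).
have [T [_ [Ty iST]]] := alpha4_nondisjoint a4 Sy.
have Mex n : exists m, S n `&` T !=set0 -> (N n <= m)%N /\ T (probe n m).
  have [[_ [[m Nm <-] Tp]]|] := pselect (S n `&` T !=set0); last by exists 0%N.
  by exists m.
have [M HM] := choice Mex.
have [nu [nuS STnu]] := infinite_nat_enum M iST.
pose mu k := M (nu k).
have nu_ge := increasing_ge (increasingS (fun k => leq_ltn_trans (leq_addr _ _) (nuS k))).
have muS : {homo mu : m n / (m < n)%N}.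
  apply: increasingS => k; apply: leq_ltn_trans (leq_addl (nu k) (mu k)) _.
  by apply: leq_trans (nuS k) _; exact: leq_trans (HN _).1 (HM _ (STnu _)).1.
exists mu; split => // U /nbhs_boxP [s [e [e0 sU]]].
have fbad : finite_set (T `\` box y s e) := Ty.2.2 _ (nbhs_box y s e0).
have [k0 Hk0] := finite_nat_bounded (probe_indices_finite (fun n => (HN n).2) fbad).
exists k0 => k i k0k ik; apply: sU => t ts.
have [NM Tp] := HM _ (STnu k).
have good : box y s e (probe (nu k) (mu k)).
  apply: contrapT => bad; have := Hk0 (nu k) (ex_intro _ (mu k) (conj NM (conj Tp bad))).
  by rewrite ltnNge (leq_trans k0k (nu_ge k)).
have := good t ts; rewrite ev_probe [ev y t + _]addrC addrK ger0_norm; last first.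
  by apply: addr_ge0; [exact: sdev_ge0|exact: ltW (offset_gt0 _ _)].
have := @dev_le_sdev (nu k) (mu k) t i (leq_trans ik (nu_ge k)).
have := offset_gt0 (nu k) (mu k); rewrite /dev; lra.
Qed.

End diagonal.

Lemma alpha4_alpha2m : alpha4 Y -> alpha2m Y.
Proof.
move=> a4 y x xy; have [mu [muS xmuy]] := alpha4_diagonal xy a4.
exists mu; split => [n|]; first exact: muS.
by have := diagonal_cvg_set_converges Cp_accessible xy muS xmuy; apply.
Qed.

Lemma Cp_shift_continuous f (c : R) : continuous (fun t => ev f t + c).
Proof. by move=> t; apply: cvgD; [exact: ev_continuous|exact: cvg_cst]. Qed.

Definition Cp_shift f (c : R) : Y := Cp_of (@Cp_shift_continuous f c).

Lemma ev_Cp_shift f c t : ev (Cp_shift f c) t = ev f t + c.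
Proof. by []. Qed.

Lemma Cp_shift_lim (u : nat -> Y) y c : lim_seq u y ->
  lim_seq (fun m => Cp_shift (u m) c) (Cp_shift y c).
Proof.
move=> /lim_seq_CpP [uy uty]; apply/lim_seq_CpP; split => [m|t].
  move=> /(congr1 (ev^~ _)) ucy; apply: (uy m); apply: ev_inj => t.
  by have := ucy t; rewrite !ev_Cp_shift => /addIr.
by apply: cvgD; [exact: uty|exact: cvg_cst].
Qed.

Lemma alpha4_Ramsey : alpha4 Y -> Ramsey Y.
Proof.
move=> a4 y xn x xxn xny.
have gc n m : continuous (fun t => ev y t + (ev (x n m) t - ev (xn n) t)).
  by move=> t; apply: cvgD; [|apply: cvgB]; exact: ev_continuous.
pose g n m := Cp_of (@gc n m).
have gE n m t : ev (g n m) t = ev y t + (ev (x n m) t - ev (xn n) t) by [].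
have gy n : lim_seq (g n) y.
  apply/lim_seq_CpP; split => [m gny|t].
    apply: ((xxn n).1 m); apply: ev_inj => t.
    by have := gE n m t; rewrite gny; lra.
  have -> : ev y t = ev y t + (ev (xn n) t - ev (xn n) t) by rewrite subrr addr0.
  apply: cvgD; first exact: cvg_cst.
  apply: cvgB; last exact: cvg_cst.
  by have [_] := (lim_seq_CpP _ _).1 (xxn n); apply.
have [mu [muS gmuy]] := alpha4_diagonal gy a4.
have [I [iI HI]] := increasing_thin muS.
exists I; split => // U /nbhs_boxP [s [e [e0 sU]]].
have e2 : 0 < e / 2 by rewrite divr_gt0.
have [k0 Hk0] := gmuy _ (nbhs_box y s e2).
have [k1 Hk1] := xny.2 _ (nbhs_box y s e2).
exists (maxn k0 k1) => _ [n [m [In Im /andP [Kn nm] ->]]].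
have [k nk ->] := HI n m In Im nm.
rewrite gtn_max in Kn; case/andP: Kn => k0n k1n.
apply: sU => t ts; apply: le_lt_trans (ler_distD (ev (xn n) t) _ _) _.
have := Hk0 k n (ltnW (ltn_trans k0n nk)) (ltnW nk) t ts.
rewrite gE [ev y t + _]addrC addrK.
by have := Hk1 n (ltnW k1n) t ts; lra.
Qed.

Lemma Ramsey_locally_Ramsey : Ramsey Y -> locally_Ramsey Y.
Proof.
move=> Ra y x xy; have [t0 _] := ev_neq ((xy 0).1 0).
pose xn n := Cp_shift y (harmonic n).
have xny : lim_seq xn y.
  apply/lim_seq_CpP; split => [n /(congr1 (ev^~ t0))|t].
    by rewrite ev_Cp_shift; have := @harmonic_gt0 R n; lra.
  rewrite -[ev y t in X in _ --> X]addr0.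
  by apply: cvgD; [exact: cvg_cst|exact: cvg_harmonic].
have [I [iI HI]] := Ra y xn _ (fun n => Cp_shift_lim (harmonic n) (xy n)) xny.
exists I; split => //; split; [split|split].
- by apply: (countable_range2_sub (f := x)) => z [n [m [_ _ _ ->]]]; exists n, m.
- by have := pairs_set_infinite Cp_accessible xy iI; apply.
- by case=> n [m [_ _ _ E]]; apply: ((xy n).1 m); rewrite -E.
move=> U Uy; have [s [e [e0 sU]]] := nbhs_boxP Uy.
have e2 : 0 < e / 2 by rewrite divr_gt0.
have [k Hk] := HI _ (nbhs_box y s e2).
have [k1 _ Hk1] := (@cvgrPdist_lt _ _ _ _ eventually_filter _ _).1 (@cvg_harmonic R) _ e2.
have [b Hb] := choice (fun n => (xy n).2 U Uy).
have : finite_set (\bigcup_(n in `I_(maxn k k1).+1) (x n @` `I_(b n))).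
  by apply: bigcup_finite => [|n _]; [exact: finite_II|exact: finite_image (finite_II _)].
apply: sub_finite_set => _ [[n [m [In Im nm ->]]] nU].
exists n; last by exists m => //=; rewrite ltnNge; apply/negP => /Hb.
rewrite /= ltnS leqNgt; apply/negP; rewrite gtn_max => /andP [kn k1n].
apply: nU; apply: sU => t ts.
have hx : `|ev (Cp_shift (x n m) (harmonic n)) t - ev y t| < e / 2.
  by apply: Hk t ts; exists n, m; split => //; rewrite kn.
have hn : `|0 - harmonic n| < e / 2 := Hk1 n (ltnW k1n).
have hn0 : 0 <= harmonic n :> R := harmonic_ge0 n.
rewrite ev_Cp_shift in hx; rewrite sub0r normrN ger0_norm // in hn.
have -> : ev (x n m) t - ev y t = (ev (x n m) t + harmonic n - ev y t) - harmonic n.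
  by rewrite addrAC addrK.
by apply: le_lt_trans (ler_normD _ _) _; rewrite normrN [`|harmonic n|]ger0_norm //; lra.
Qed.
End Cp.

Theorem corollary2p8 (R : realType) (X : topologicalType) :
  let Y := Cp X R in
  (alpha2m Y <-> alpha2 Y) /\
  (alpha2 Y <-> alpha3m Y) /\
  (alpha3m Y <-> alpha3 Y) /\
  (alpha3 Y <-> alpha4 Y) /\
  (alpha4 Y <-> locally_Ramsey Y) /\
  (locally_Ramsey Y <-> Ramsey Y).
Proof.
move=> Y; have T1 : accessible_space Y := @Cp_accessible R X.
have := @alpha4_alpha2m R X; have := @alpha4_Ramsey R X.
have := @Ramsey_locally_Ramsey R X; have := alpha2m_alpha2 T1.
have := alpha2m_locally_Ramsey T1; have := @locally_Ramsey_alpha3m Y.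
have := @alpha3m_alpha4 Y; have := @alpha2_alpha3 Y; have := @alpha3_alpha4 Y.
tauto.
Qed.
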